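(* Fix $\alpha\in(0,1)$ and $p,q\in[0,1]$ with $q=\alpha p$. Then the set function $\mathcal{M}\mapsto R(p,q,\mathcal{M})$, defined on subsets $\mathcal{M}\subseteq\widetilde{S}(q)$, is monotonically non-decreasing and submodular.
   Context: Let $\mathcal{G}=(\mathcal{U},\mathcal{E})$ be a finite directed graph without self-loops, $\mathcal{U}=\{1,\dots,U\}$. For $u,v\in\mathcal{U}$, $D(u,v;\mathcal{G})$ denotes the number of edges of a shortest directed path from $u$ to $v$ in $\mathcal{G}$, with $D(u,v;\mathcal{G})=+\infty$ if there is no such path. For an integer $d\ge0$, the $d$-visible set of $u$ is $\mathcal{V}(u,d;\mathcal{G})=\{v\in\mathcal{U}: D(v,u;\mathcal{G})\le d\}$. Fix an integer social visibility threshold $\tau\ge1$. Let $\mathcal{R}\subseteq\mathcal{U}$ (requesters) and $\mathcal{S}\subseteq\mathcal{U}$ (suppliers) be disjoint. Each requester $u\in\mathcal{R}$ has a valuation $p_u\in[0,1]$ and each supplier $u\in\mathcal{S}$ has a valuation $q_u\in[0,1]$. For $p\in[0,1]$ let $\widetilde{R}(p)=\{u\in\mathcal{R}: p_u\ge p\}$ and for $q\in[0,1]$ let $\widetilde{S}(q)=\{u\in\mathcal{S}: q_u\le q\}$. For $\mathcal{M}\subseteq\mathcal{S}$ let $\widetilde{G}(p,\mathcal{M})$ be the graph obtained from $\mathcal{G}$ by adding a directed edge from every $s\in\mathcal{M}$ to every $r\in\widetilde{R}(p)$. For $u\in\widetilde{R}(p)$ let $I_u(p,\mathcal{M})=|\mathcal{V}(u,\tau;\widetilde{G}(p,\mathcal{M}))\setminus\mathcal{V}(u,\tau;\mathcal{G})|$,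 and $I(p,\mathcal{M})=\sum_{u\in\widetilde{R}(p)}I_u(p,\mathcal{M})$. The revenue is $R(p,q,\mathcal{M})=p\,I(p,\mathcal{M})-q\,I(p,\mathcal{M})$; when $q=\alpha p$ this equals $(1-\alpha)p\,I(p,\mathcal{M})$. *)

From mathcomp Require Import all_boot all_order all_algebra.
Set Implicit Arguments. Unset Strict Implicit. Unset Printing Implicit Defensive.
Import Order.TTheory GRing.Theory Num.Theory.

(* Directed graph on a finite vertex type T, given by its edge relation e.
   [dist_le e v u d] : "D(v,u;G) <= d", i.e. there is a directed path
   v = x0 -> x1 -> ... -> xk = u with k <= d edges (a shortest one then
   has at most d edges; if there is no path, D = +oo and this is false). *)
Definition dist_le (T : finType) (e : rel T) (v u : T) (d : nat) : bool :=
  [exists k : 'I_d.+1, exists s : k.-tuple T, path e v s && (last v s == u)].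

Definition visible (T : finType) (e : rel T) (u : T) (d : nat) : {set T} :=
  [set v | dist_le e v u d].

Local Open Scope ring_scope.
Section Market.
Variables (F : realFieldType) (T : finType).

Definition Rtilde (Rq : {set T}) (pv : T -> F) (p : F) : {set T} :=
  [set u in Rq | p <= pv u].

Definition Stilde (Sq : {set T}) (qv : T -> F) (q : F) : {set T} :=
  [set u in Sq | qv u <= q].

Definition aug_edge (e : rel T) (Rq : {set T}) (pv : T -> F) (p : F)
    (M : {set T}) : rel T :=
  fun x y => e x y || ((x \in M) && (y \in Rtilde Rq pv p)).

Definition Iu (e : rel T) (tau : nat) (Rq : {set T}) (pv : T -> F) (p : F)
    (M : {set T}) (u : T) : nat :=
  #|visible (aug_edge e Rq pv p M) u tau :\: visible e u tau|.

Definition Itot (e : rel T) (tau : nat) (Rq : {set T}) (pv : T -> F) (p : F)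
    (M : {set T}) : nat :=
  \sum_(u in Rtilde Rq pv p) Iu e tau Rq pv p M u.

Definition revenue (e : rel T) (tau : nat) (Rq : {set T}) (pv : T -> F)
    (p q : F) (M : {set T}) : F :=
  p * (Itot e tau Rq pv p M)%:R - q * (Itot e tau Rq pv p M)%:R.

End Market.

From mathcomp Require Import all_boot all_order all_algebra.
From mathcomp Require Import zify.
Set Implicit Arguments. Unset Strict Implicit. Unset Printing Implicit Defensive.
Import Order.TTheory GRing.Theory Num.Theory.
Local Open Scope ring_scope.

(* The revenue is R(p,q,M) = (1 - alpha) p I(p,M) = (p - q) I(p,M) with a
   nonnegative factor p - q, so it suffices to show that M |-> I(p,M) is
   monotone and submodular, and since I is a sum over requesters u, that
   each M |-> I_u(p,M) is.  The key observation is that I_u is a coverage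
   function:  a vertex that becomes tau-visible from u after adding the
   edges M x R~(p) is already visible after adding the edges of a single
   supplier s0 in M: a witnessing path splits into an e-path to some
   s0 in M, an added edge, and an e-path from the target r of the LAST
   added edge; the added edge s0 -> r shortcuts everything in between.
   Hence the set of newly visible vertices for M is the union over s in M
   of the newly visible vertices for {s}, and the cardinality of a union
   of sets indexed by M is monotone and submodular in M. *)

Section Coverage.
Variables (I T : finType) (C : I -> {set T}).

Definition coverage (M : {set I}) : {set T} := \bigcup_(i in M) C i.

Lemma coverageS (A B : {set I}) : A \subset B -> coverage A \subset coverage B.
Proof.
move=> AB; apply/bigcupsP => i iA.
by apply: (bigcup_max i (subsetP AB i iA)).
Qed.

Lemma coverageU1 (x : I) (M : {set I}) :
  coverage (x |: M) = C x :|: coverage M.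
Proof. by rewrite /coverage bigcup_setU big_set1. Qed.

(* Diminishing returns: adding x covers C x minus what is already covered,
   and a larger M already covers more of C x. *)
Lemma card_coverage_submod (A B : {set I}) (x : I) : A \subset B ->
  (#|coverage (x |: B)| + #|coverage A| <=
   #|coverage (x |: A)| + #|coverage B|)%N.
Proof.
move=> AB; rewrite !coverageU1.
have cA := cardsUI (C x) (coverage A); have cB := cardsUI (C x) (coverage B).
have IAB : (#|C x :&: coverage A| <= #|C x :&: coverage B|)%N.
  by apply/subset_leq_card/setIS/coverageS.
lia.
Qed.

End Coverage.

Lemma dist_leP (T : finType) (E : rel T) v u d :
  reflect (exists s, [/\ (size s <= d)%N, path E v s & last v s = u])
          (dist_le E v u d).
Proof.
apply: (iffP existsP) => [[k /existsP [s /andP[Hp /eqP Hl]]]|[s [Hs Hp Hl]]].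
  exists (val s); split => //; rewrite size_tuple -ltnS; exact: ltn_ord.
have Hs' : (size s < d.+1)%N by rewrite ltnS.
exists (Ordinal Hs'); apply/existsP; exists (in_tuple s) => /=.
by rewrite Hp Hl eqxx.
Qed.

Lemma visibleS (T : finType) (E E' : rel T) u d : subrel E E' ->
  visible E u d \subset visible E' u d.
Proof.
move=> EE'; apply/subsetP => v; rewrite !inE => /dist_leP [s [Hs Hp Hl]].
by apply/dist_leP; exists s; split => //; apply: sub_path Hp.
Qed.

Section Augmentation.
Variables (F : realFieldType) (T : finType) (e : rel T) (Rq : {set T})
  (pv : T -> F) (p : F) (tau : nat).

Local Notation aug M := (aug_edge e Rq pv p M).
Local Notation Rt := (Rtilde Rq pv p).

Definition new_visible (M : {set T}) (u : T) : {set T} :=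
  visible (aug M) u tau :\: visible e u tau.

Lemma aug_edgeS (M N : {set T}) : M \subset N -> subrel (aug M) (aug N).
Proof.
move=> MN a b; rewrite /aug_edge => /orP[->//|/andP[aM bR]].
by rewrite (subsetP MN _ aM) bR orbT.
Qed.

Lemma new_visibleS (M N : {set T}) u : M \subset N ->
  new_visible M u \subset new_visible N u.
Proof. by move=> MN; apply/setSD/visibleS/aug_edgeS. Qed.

(* A path in the augmented graph either avoids added edges, or decomposes
   as an e-path to some s0 in M, an added edge s0 -> r, and an e-path from
   r; jumping straight to the target of the LAST added edge keeps the
   length from increasing. *)
Lemma aug_path_decomp (M : {set T}) x s : path (aug M) x s -> path e x s \/
  exists s0 r s1 s2, [/\ s0 \in M, r \in Rt, path e x s1, last x s1 = s0 &
     [/\ path e r s2, last r s2 = last x s & (size s1 + size s2 < size s)%N]].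
Proof.
elim: s x => [|y s IH] x /=; first by left.
case/andP => /orP[Hxy|/andP[xM yR]]
  /IH [Hp|[s0 [r [s1 [s2 [s0M rR H1 E1 [H2 E2 Hsz]]]]]]].
- by left; rewrite Hxy Hp.
- right; exists s0, r, (y :: s1), s2.
  by split => //=; rewrite ?Hxy //; split => //; rewrite addSn ltnS.
- by right; exists x, y, [::], s.
- by right; exists x, r, [::], s2; split => //=; split => //; lia.
Qed.

Lemma new_visible_single (M : {set T}) u v : v \in new_visible M u ->
  exists2 s0, s0 \in M & v \in new_visible [set s0] u.
Proof.
rewrite !inE => /andP[vV0 /dist_leP [s [Hs Hp Hl]]].
case: (aug_path_decomp Hp) => [He|[s0 [r [s1 [s2 [s0M rR H1 E1 [H2 E2 Hsz]]]]]]].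
  by case/negP: vV0; apply/dist_leP; exists s.
have eaug : subrel e (aug [set s0]) by move=> a b Hab; rewrite /aug_edge Hab.
exists s0; rewrite // !inE vV0; apply/dist_leP; exists (s1 ++ r :: s2); split.
- by rewrite size_cat /= addnS; apply: leq_trans Hsz Hs.
- rewrite cat_path /= E1 /aug_edge inE eqxx rR orbT /=.
  by rewrite (sub_path eaug H1) (sub_path eaug H2).
- by rewrite last_cat /= E2 Hl.
Qed.

Lemma new_visible_coverage (M : {set T}) u :
  new_visible M u = coverage (new_visible^~ u \o set1) M.
Proof.
apply/eqP; rewrite eqEsubset; apply/andP; split.
  apply/subsetP => v /new_visible_single [s0 s0M vs0].
  by apply/bigcupP; exists s0.
by apply/bigcupsP => s sM; apply/new_visibleS; rewrite sub1set.
Qed.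

Lemma Itot_mono (M N : {set T}) : M \subset N ->
  (Itot e tau Rq pv p M <= Itot e tau Rq pv p N)%N.
Proof.
move=> MN; apply: leq_sum => u _.
by apply/subset_leq_card/new_visibleS.
Qed.

Lemma Itot_submod (A B : {set T}) x : A \subset B ->
  (Itot e tau Rq pv p (x |: B) + Itot e tau Rq pv p A <=
   Itot e tau Rq pv p (x |: A) + Itot e tau Rq pv p B)%N.
Proof.
move=> AB; rewrite /Itot -!big_split; apply: leq_sum => u _ /=.
rewrite /Iu -!/(new_visible _ u) !new_visible_coverage.
exact: card_coverage_submod.
Qed.

End Augmentation.

Theorem theorem2 (F : realFieldType) (T : finType) (e : rel T)
    (tau : nat) (Rq Sq : {set T}) (pv qv : T -> F) (alpha p q : F) :
  irreflexive e ->
  (1 <= tau)%N ->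
  [disjoint Rq & Sq] ->
  (forall u, u \in Rq -> 0 <= pv u <= 1) ->
  (forall u, u \in Sq -> 0 <= qv u <= 1) ->
  0 < alpha < 1 -> 0 <= p <= 1 -> 0 <= q <= 1 -> q = alpha * p ->
  let f := revenue e tau Rq pv p q in
  (* monotonically non-decreasing on subsets of S~(q) *)
  (forall M1 M2 : {set T},
      M1 \subset M2 -> M2 \subset Stilde Sq qv q -> f M1 <= f M2) /\
  (* submodular (diminishing returns) on subsets of S~(q) *)
  (forall (A B : {set T}) (x : T),
      A \subset B -> B \subset Stilde Sq qv q ->
      x \in Stilde Sq qv q -> x \notin B ->
      f (x |: B) - f B <= f (x |: A) - f A).
Proof.
move=> _ _ _ _ _ /andP[a0 a1] /andP[p0 _] _ qE f.
have margin : 0 <= p - q.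
  by rewrite qE -{1}(mul1r p) -mulrBl mulr_ge0 // subr_ge0 ltW.
have fE M : f M = (p - q) * (Itot e tau Rq pv p M)%:R.
  by rewrite /f /revenue mulrBl.
split=> [M1 M2 M12 _ | A B x AB _ _ _].
  by rewrite !fE ler_wpM2l // ler_nat Itot_mono.
rewrite !fE -!mulrBr ler_wpM2l // lerBlDr addrAC lerBrDr -!natrD ler_nat.
exact: Itot_submod.
Qed.
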